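(* (Operational Friendliness no-go theorem.) If a superobserver can perform arbitrary quantum operations on an observer and its environment, then no physical theory can satisfy Operational Friendliness. Precisely: in the Operational Friendliness scenario described in the context, there is a choice of qubit preparations $P_0,P_1$ and measurements $C$, $D$, $B$ for which the quantum-mechanical empirical distributions $\wp(c,d\mid x=0,y=0)$, $\wp(c,b\mid x=0,y=1)$, $\wp(a,d\mid x=1,y=0)$, $\wp(a,b\mid x=1,y=1)$ cannot be reproduced by any family of distributions $p(a,b,c,d\mid x,y)$ satisfying both Absoluteness of Observed Events and Operational Agency.
   Context: Operational Friendliness scenario: Alice prepares a qubit $S$ in a state $P_a$, where $a\in\{0,1\}$ takes each value with probability $1/2$. She sends $S$ to her friend Charlie, who performs a two-outcome measurement $C$ on $S$ with outcome $c\in\{0,1\}$, modelled (from outside Charlie's lab) by a unitary $U_C$ on $S$ together with Charlie's lab. Alice then has a binary choice $x\in\{0,1\}$: if $x=0$ she takes Charlie's outcome as hers; if $x=1$ she acts as a superobserver and applies $U_C^\dagger$, undoing Charlie's measurement and erasing the record of $c$. The system $S$ is then passed to Debbie, who performs a two-outcome measurement $D$ with outcome $d\in\{0,1\}$, modelled by a unitary $U_D$. Bob has a binary choice $y\in\{0,1\}$: if $y=0$ he takes Debbie's outcome as his outcome ($b=d$); if $y=1$ he applies $U_D^\dagger$, erasing $d$, and then performs a two-outcome measurement $B$ on $S$ with outcome $b\in\{0,1\}$. The empirically accessible (single-agent verifiable) distributions are $\wp(c,d\mid x=0,y=0)$, $\wp(c,b\mid x=0,y=1)$, $\wp(a,d\mid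 x=1,y=0)$, $\wp(a,b\mid x=1,y=1)$, computed by quantum theory (Born rule). Here $\wp$ denotes empirical distributions, $p$ theoretical ones. Absoluteness of Observed Events (AOE): every observed event is an absolute single event, not relative to anything or anyone; in this scenario it implies the existence, for each $x,y$, of joint distributions $p(a,b,c,d\mid x,y)$ over all observed outcomes (including erased ones) whose marginals reproduce the empirical distributions above. Operational Agency: any operational equivalence that would be verified by a hypothetical agent with access to all the relevant variables still holds even if it cannot be verified by a single agent. In this scenario it implies, e.g., $p(c\mid x,y)=p(c)$, $p(c,d\mid x,y)=p(c,d\mid x)$, $p(a,d\mid x,y)=p(a,d\mid x)$, $p(d\mid c,x,y)=p(d\mid c,y)$ and $p(b\mid c,x,y)=p(b\mid c,y)$. Operational Friendliness is the conjunction of AOE and Operational Agency. *)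

From HB Require Import structures.
From mathcomp Require Import all_boot all_order all_algebra.
From mathcomp Require Import algC.
Set Implicit Arguments. Unset Strict Implicit. Unset Printing Implicit Defensive.
Import Order.TTheory GRing.Theory Num.Theory.
Local Open Scope ring_scope.

Notation qmat := 'M[algC]_2.

Definition adjmx (A : qmat) : qmat := (map_mx Num.conj A)^T.

Definition hermitian (A : qmat) : Prop := adjmx A = A.

(** Positive semidefinite: <v|A|v> >= 0 for every vector v
    (in algC, [0 <= z] means z is real and nonnegative). *)
Definition psd (A : qmat) : Prop :=
  hermitian A /\
  forall v : 'cV[algC]_2, 0 <= ((map_mx Num.conj v)^T *m A *m v) 0 0.

Definition density (P : qmat) : Prop := psd P /\ \tr P = 1.

(** A two-outcome projective measurement {M 0, M 1} (outcome 0 = false). *)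
Definition projmeas (M : bool -> qmat) : Prop :=
  (forall k, hermitian (M k) /\ M k *m M k = M k) /\ M false + M true = 1%:M.

(** Empirical (Born-rule) distributions of the scenario, with a uniform
    over {0,1} (prob. 1/2), Charlie's / Debbie's measurements modelled by
    the ideal (Lueders) unitary measurement interaction, so that undoing a
    measurement restores the pre-measurement state of S. *)
Definition emp00 (P C D : bool -> qmat) (c d : bool) : algC :=
  \sum_(a : bool) 2^-1 * \tr (D d *m (C c *m P a *m C c)).
(* x = 0, y = 1 : wp(c,b)  (Debbie's measurement undone by Bob) *)
Definition emp01 (P C B : bool -> qmat) (c b : bool) : algC :=
  \sum_(a : bool) 2^-1 * \tr (B b *m (C c *m P a *m C c)).
(* x = 1, y = 0 : wp(a,d)  (Charlie's measurement undone by Alice) *)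
Definition emp10 (P D : bool -> qmat) (a d : bool) : algC :=
  2^-1 * \tr (D d *m P a).
Definition emp11 (P B : bool -> qmat) (a b : bool) : algC :=
  2^-1 * \tr (B b *m P a).

(** A OFfamily of theoretical distributions p(a,b,c,d | x,y):
    [p x y a b c d]. *)
Definition OFfamily := bool -> bool -> bool -> bool -> bool -> bool -> algC.

Definition is_family (p : OFfamily) : Prop :=
  forall x y, (forall a b c d, 0 <= p x y a b c d) /\
    \sum_(a : bool) \sum_(b : bool) \sum_(c : bool) \sum_(d : bool)
       p x y a b c d = 1.

Definition pC (p : OFfamily) x y c : algC :=
  \sum_(a : bool) \sum_(b : bool) \sum_(d : bool) p x y a b c d.
Definition pCD (p : OFfamily) x y c d : algC :=
  \sum_(a : bool) \sum_(b : bool) p x y a b c d.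
Definition pCB (p : OFfamily) x y c b : algC :=
  \sum_(a : bool) \sum_(d : bool) p x y a b c d.
Definition pAD (p : OFfamily) x y a d : algC :=
  \sum_(b : bool) \sum_(c : bool) p x y a b c d.
Definition pAB (p : OFfamily) x y a b : algC :=
  \sum_(c : bool) \sum_(d : bool) p x y a b c d.

(** Conditionals p(d|c,x,y), p(b|c,x,y) (only meaningful when p(c|x,y) <> 0). *)
Definition condD (p : OFfamily) x y c d : algC := pCD p x y c d / pC p x y c.
Definition condB (p : OFfamily) x y c b : algC := pCB p x y c b / pC p x y c.

Definition AOE (P C D B : bool -> qmat) (p : OFfamily) : Prop :=
  [/\ forall c d, pCD p false false c d = emp00 P C D c d,
      forall c b, pCB p false true c b = emp01 P C B c b,
      forall a d, pAD p true false a d = emp10 P D a d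
    & forall a b, pAB p true true a b = emp11 P B a b].

Definition OpAgency (p : OFfamily) : Prop :=
  [/\ forall x y x' y' c, pC p x y c = pC p x' y' c,
      forall x y y' c d, pCD p x y c d = pCD p x y' c d,
      forall x y y' a d, pAD p x y a d = pAD p x y' a d,
      forall x x' y c d, pC p x y c != 0 -> pC p x' y c != 0 ->
                         condD p x y c d = condD p x' y c d
    & forall x x' y c b, pC p x y c != 0 -> pC p x' y c != 0 ->
                         condB p x y c b = condB p x' y c b].

Definition OpFriendliness (P C D B : bool -> qmat) (p : OFfamily) : Prop :=
  is_family p /\ AOE P C D B p /\ OpAgency p.

(** Operational Agency forces Debbie's outcome [d] to have the same joint
    law with Charlie's outcome [c] whether or not Alice undoes Charlie's
    measurement ([p(d|c)] and [p(c)] do not depend on [x]).  Hence the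
    marginal law of [d] at [y = 0] cannot depend on [x].  Quantum theory
    violates this: for the state [|+>], Charlie measuring [Z] and Debbie
    measuring [X], Debbie finds [|->] with probability [1/2] after Charlie's
    measurement but never once Alice has undone it. *)
From Pilot Require Import Defs.
From HB Require Import structures.
From mathcomp Require Import all_boot all_order all_algebra.
From mathcomp Require Import algC.
From mathcomp Require Import ring.
Import Order.TTheory GRing.Theory Num.Theory.
Local Open Scope ring_scope.

Section OperationalAgency.

Variable p : OFfamily.
Hypothesis p_family : is_family p.

Lemma pC_sumD x y c : pC p x y c = \sum_(d : bool) pCD p x y c d.
Proof. by rewrite /pC /pCD !big_bool /=; ring. Qed.

Lemma pCD_ge0 x y c d : 0 <= pCD p x y c d.
Proof.
by apply: sumr_ge0 => a _; apply: sumr_ge0 => b _; case: (p_family x y).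
Qed.

Lemma pCD_pC0 x y c d : pC p x y c = 0 -> pCD p x y c d = 0.
Proof. by rewrite pC_sumD => /psumr_eq0P -> // d' _; apply: pCD_ge0. Qed.

Lemma pCD_indep_x x x' y c d : OpAgency p -> pCD p x y c d = pCD p x' y c d.
Proof.
move=> [eq_pC _ _ eq_condD _].
(* Where [p(c) = 0] the conditionals are undefined, but positivity kills both joints. *)
have [pC0 | pC_neq0] := eqVneq (pC p x y c) 0.
  have pC'0 : pC p x' y c = 0 by rewrite -(eq_pC x y).
  by rewrite !pCD_pC0.
have pC'_neq0 : pC p x' y c != 0 by rewrite -(eq_pC x y).
have := eq_condD x x' y c d pC_neq0 pC'_neq0.
by rewrite /condD (eq_pC x' y x y) => /(mulIf (invr_neq0 pC_neq0)).
Qed.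

End OperationalAgency.

Lemma OpFriendliness_marginalD P C D B p :
  OpFriendliness P C D B p ->
  forall d, \sum_(c : bool) emp00 P C D c d = \sum_(a : bool) emp10 P D a d.
Proof.
move=> [fam [[emp00E _ emp10E _] agency]] d.
under eq_bigr do rewrite -emp00E (pCD_indep_x _ fam false true) //.
under [RHS]eq_bigr do rewrite -emp10E.
by rewrite /pCD /pAD !big_bool /=; ring.
Qed.

Definition mx2 (a b c d : algC) : qmat :=
  \matrix_(i, j) if i == 0 :> nat then (if j == 0 :> nat then a else b)
                 else (if j == 0 :> nat then c else d).

Lemma mx2_mul a b c d a' b' c' d' :
  mx2 a b c d *m mx2 a' b' c' d' =
  mx2 (a * a' + b * c') (a * b' + b * d') (c * a' + d * c') (c * b' + d * d').
Proof.
apply/matrixP => -[[|[|//]] ?] [[|[|//]] ?];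
  by rewrite !mxE !big_ord_recl big_ord0 !mxE /= addr0.
Qed.

Lemma mx2_add a b c d a' b' c' d' :
  mx2 a b c d + mx2 a' b' c' d' = mx2 (a + a') (b + b') (c + c') (d + d').
Proof. by apply/matrixP => -[[|[|//]] ?] [[|[|//]] ?]; rewrite !mxE. Qed.

Lemma mx2_1 : 1%:M = mx2 1 0 0 1.
Proof. by apply/matrixP => -[[|[|//]] ?] [[|[|//]] ?]; rewrite !mxE. Qed.

Lemma mxtrace_mx2 a b c d : \tr (mx2 a b c d) = a + d.
Proof. by rewrite /mxtrace !big_ord_recl big_ord0 !mxE addr0. Qed.

Lemma adjmx_mx2 a b c d : adjmx (mx2 a b c d) = mx2 a^* c^* b^* d^*.
Proof. by apply/matrixP => -[[|[|//]] ?] [[|[|//]] ?]; rewrite !mxE. Qed.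

(* [Defs.] is needed: [hermitian] from [all_algebra] shadows it. *)
Lemma hermitian_mx2 (a b d : algC) :
  a \is Num.real -> b \is Num.real -> d \is Num.real -> Defs.hermitian (mx2 a b b d).
Proof.
move=> ra rb rd.
by rewrite /Defs.hermitian adjmx_mx2 (conj_Creal ra) (conj_Creal rb) (conj_Creal rd).
Qed.

Lemma psd_mx2_const (a : algC) : 0 <= a -> psd (mx2 a a a a).
Proof.
move=> a_ge0; have ra := ger0_real a_ge0.
split; first exact: hermitian_mx2.
move=> v; rewrite !mxE !big_ord_recl !big_ord0 !mxE !big_ord_recl !big_ord0 !mxE /=.
set v0 := v _ _; set v1 := v _ _.
have -> : (v0^* * a + (v1^* * a + 0)) * v0 + ((v0^* * a + (v1^* * a + 0)) * v1 + 0)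
        = a * ((v0 + v1) * (v0 + v1)^*) by rewrite rmorphD; ring.
by rewrite mulr_ge0 ?mul_conjC_ge0.
Qed.

Definition plus_state : qmat := mx2 2^-1 2^-1 2^-1 2^-1.

Definition zmeas (c : bool) : qmat := if c then mx2 0 0 0 1 else mx2 1 0 0 0.

Definition xmeas (d : bool) : qmat :=
  let s := if d then - 2^-1 else 2^-1 in mx2 2^-1 s s 2^-1.

Lemma real_half : (2^-1 : algC) \is Num.real.
Proof. by rewrite rpredV rpred_nat. Qed.

Lemma density_plus_state : density plus_state.
Proof.
split; first by apply: psd_mx2_const; rewrite invr_ge0 ler0n.
by rewrite mxtrace_mx2; field.
Qed.

Lemma projmeas_zmeas : projmeas zmeas.
Proof.
split; last by rewrite mx2_add mx2_1 !(addr0, add0r).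
by case; (split; [apply: hermitian_mx2; rewrite ?rpred0 ?rpred1 |
  rewrite mx2_mul; congr mx2; ring]).
Qed.

Lemma projmeas_xmeas : projmeas xmeas.
Proof.
split; last by rewrite mx2_add mx2_1; congr mx2; field.
by case; (split; [apply: hermitian_mx2; rewrite ?rpredN real_half |
  rewrite mx2_mul; congr mx2; field]).
Qed.

Lemma marginalD1_dephased :
  \sum_(c : bool) emp00 (fun=> plus_state) zmeas xmeas c true = 2^-1.
Proof. by rewrite /emp00 !big_bool /= /plus_state !mx2_mul !mxtrace_mx2; field. Qed.

Lemma marginalD1_undone :
  \sum_(a : bool) emp10 (fun=> plus_state) xmeas a true = 0.
Proof. by rewrite /emp10 !big_bool /= /plus_state !mx2_mul !mxtrace_mx2; field. Qed.

Theorem theorem2 :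
  exists (P C D B : bool -> 'M[algC]_2),
    (forall a, density (P a)) /\ projmeas C /\ projmeas D /\ projmeas B /\
    ~ (exists p : OFfamily, OpFriendliness P C D B p).
Proof.
exists (fun=> plus_state), zmeas, xmeas, zmeas.
split=> [_|]; first exact: density_plus_state.
do 3 (split; first by [exact: projmeas_zmeas | exact: projmeas_xmeas]).
move=> [p /OpFriendliness_marginalD/(_ true)].
by rewrite marginalD1_dephased marginalD1_undone => /eqP; rewrite invr_eq0 pnatr_eq0.
Qed.
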